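(* Let $n\ge2$, let $X\subset\mathbb{R}^n$ be finite with the Euclidean metric $d$, let $k\in\mathbb{N}$, and fix an increasing sequence $0=\epsilon_0<\epsilon_1<\epsilon_2<\cdots$. For any $i\in\mathbb{N}$, any $\nu$ with $\epsilon_{i-1}<\nu\le\epsilon_i$, any $\alpha\ge0$ and any $p\ne q\in X$: \[ p,q \text{ lie in the same connected component of } H(i)_\nu \iff p,q \text{ lie in the same connected component of } G(X,\rho^X)_\nu, \] and \[ p,q \text{ lie in the same connected component of } \mathcal{F}(i)_\alpha \iff p,q \text{ lie in the same connected component of } G(X,\rho^X)_\alpha. \]
   Context: DBSCAN$^*$: for $Y\subset X$ and $\epsilon>0$, $\mathcal{C}(Y,\epsilon)=\{p\in Y:|\{y\in Y:d(p,y)\le\epsilon\}|>k\}$, $\mathcal{N}(Y,\epsilon)=Y\setminus\mathcal{C}(Y,\epsilon)$, and $\mathcal{D}^*(Y,\epsilon)$ is the set of vertex sets of the connected components of the graph with vertex set $\mathcal{C}(Y,\epsilon)$ and an edge between distinct $p,q$ whenever $d(p,q)\le\epsilon$. For $Z\subset X$ and $p\in Z$, $\operatorname{core}^Z_k(p)$ is the distance from $p$ to a $k$-th nearest neighbour of $p$ in $Z$ (the $k$-th smallest value of $d(p,z)$, $z\in Z\setminus\{p\}$, with multiplicity) and $\rho^Z(p,q)=\max\{\operatorname{core}^Z_k(p),\operatorname{core}^Z_k(q),d(p,q)\}$ for $p\ne q$, $\rho^Z(p,p)=0$. Cubes (for a given $\epsilon>0$): $\mathcal{Q}(\epsilon)$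 is the collection of closed cubes $\{x\in\mathbb{R}^n: j_i\frac{\epsilon}{2\sqrt n}\le x_i\le (j_i+1)\frac{\epsilon}{2\sqrt n}\}$, $j\in\mathbb{Z}^n$; $S^m=\{x:\max_i|x_i-s_i|\le m\frac{\epsilon}{2\sqrt n}\text{ for some }s\in S\}$; $\mathcal{I}(B)=\{S\in\mathcal{Q}(\epsilon):S\cap B\ne\emptyset\}$. For $A\subset X$, $S\in\mathcal{I}(A)$ is an interior cube of $A$ if $S^1\cap X\subset A$ and every $T\in\mathcal{Q}(\epsilon)$ with $T\subset S^1$ lies in $\mathcal{I}(A)$, otherwise a boundary cube; $\partial A$ is the union of boundary cubes. For $Z\subset\mathbb{R}^n$, integer $N\ge0$: $Z^N=\bigcup_{S\in\mathcal{I}(Z)}S^N$, $Z^N_C=Z^N\cap C$. $\mathfrak{n},\mathfrak{m}$ are the smallest integers with $\mathfrak{n}\ge\sqrt n-1$, $\mathfrak{m}\ge2\sqrt n$; $\mathfrak{N}=\mathfrak{n}+\mathfrak{m}$. $F(Y,\epsilon)=\bigcup_{C\in\mathcal{D}^*(Y,\epsilon)}(\partial C)^{\mathfrak{N}}_C\cup\mathcal{N}(Y,\epsilon)$, cubes in $\mathcal{Q}(\epsilon)$. Graphs: $G(Z,w)$ is the complete weighted graph on finite $Z$ with weights $w(p,q)$; for a weighted graph $G$ and $\alpha\ge0$, $G_\alpha$ has the same vertex set and only the edges of weight $\le\alpha$. The union $G\cup H$ of weighted graphs has vertex set $V(G)\cup V(H)$, edge set $E(G)\cup E(H)$, and weight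 on a common edge the minimum of the two weights. Construction: $X_1=X$, $X_{i+1}=F(X_i,\epsilon_i)$ for $i\ge1$; $H(0)$ is the graph on $X_1$ with no edges; for $i\ge0$, $H(i+1)=\bigcup_{C\in\mathcal{D}^*(X_{i+1},\epsilon_{i+1})}G\big(B_{\epsilon_{i+1}}(C),\rho^{B_{\epsilon_{i+1}}(C)}\big)_{\epsilon_{i+1}}\cup H(i)$, where $B_{\epsilon_{i+1}}(C)=\{y\in X_{i+1}: d(y,C)\le\epsilon_{i+1}\}$. Finally $\mathcal{F}(i)=G(X_{i+1},\rho^{X_{i+1}})\cup H(i)$. *)

From HB Require Import structures.
From mathcomp Require Import all_boot all_order all_algebra.
From mathcomp Require Import finmap.
From mathcomp Require Import boolp reals.
Set Implicit Arguments. Unset Strict Implicit. Unset Printing Implicit Defensive.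
Import Order.TTheory GRing.Theory Num.Theory.
Local Open Scope ring_scope.
Local Open Scope fset_scope.

Section DBSCAN.
Variables (R : realType) (n : nat).

Definition pt := 'rV[R]_n.

Definition dist (p q : pt) : R := Num.sqrt (\sum_(i < n) (p ord0 i - q ord0 i) ^+ 2).

Section Dbscan.
Variable k : nat.

Definition coreset (Y : {fset pt}) (eps : R) : {fset pt} :=
  [fset p in Y | (k < #|` [fset y in Y | (dist p y <= eps)%R]|)%N].

Definition noise (Y : {fset pt}) (eps : R) : {fset pt} := Y `\` coreset Y eps.

Definition reachC (Y : {fset pt}) (eps : R) (p q : pt) : Prop :=
  exists s : seq pt,
    path (fun x y => [&& x \in coreset Y eps, y \in coreset Y eps & (dist x y <= eps)%R]) p s
    /\ last p s = q.

Definition compC (Y : {fset pt}) (eps : R) (p : pt) : {fset pt} :=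
  [fset q in coreset Y eps | `[< reachC Y eps p q >]].

Definition Dstar (Y : {fset pt}) (eps : R) : {fset {fset pt}} :=
  [fset compC Y eps p | p in coreset Y eps].

(* core_k^Z(p): the k-th smallest value of d(p,z), z in Z\{p}, with multiplicity.
   core_0 = 0 (p is its own 0-th neighbour); None (= +infinity) when Z\{p} has
   fewer than k points. *)
Definition coredist (Z : {fset pt}) (p : pt) : option R :=
  if k == 0%N then Some 0 else
  let l := sort <=%R [seq dist p z | z <- enum_fset Z & z != p] in
  if (k <= size l)%N then Some (nth 0 l k.-1) else None.

(* rho^Z ; None means the weight is undefined (+infinity, no edge) *)
Definition rho (Z : {fset pt}) (p q : pt) : option R :=
  if p == q then Some 0 else
  match coredist Z p, coredist Z q with
  | Some a, Some b => Some (Num.max a (Num.max b (dist p q)))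
  | _, _ => None
  end.
End Dbscan.

Section Cubes.
Variable eps : R.

Definition side : R := eps / (2 * Num.sqrt (n%:R)).

Definition cube (j : 'I_n -> int) (x : pt) : Prop :=
  forall i : 'I_n, (j i)%:~R * side <= x ord0 i <= (j i + 1)%:~R * side.

Definition cubeN (j : 'I_n -> int) (m : int) (x : pt) : Prop :=
  exists s, cube j s /\ forall i : 'I_n, `|x ord0 i - s ord0 i| <= m%:~R * side.

Definition meets (B : pt -> Prop) (j : 'I_n -> int) : Prop :=
  exists x, B x /\ cube j x.

Definition interior_cube (X A : {fset pt}) (j : 'I_n -> int) : Prop :=
  meets (fun x => x \in A) j /\
  (forall x, x \in X -> cubeN j 1 x -> x \in A) /\
  (forall j' : 'I_n -> int, (forall x, cube j' x -> cubeN j 1 x) ->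
       meets (fun x => x \in A) j').

Definition boundary_cube (X A : {fset pt}) (j : 'I_n -> int) : Prop :=
  meets (fun x => x \in A) j /\ ~ interior_cube X A j.

Definition bdry (X A : {fset pt}) (x : pt) : Prop :=
  exists j, boundary_cube X A j /\ cube j x.

Definition thicken (Z : pt -> Prop) (N : int) (x : pt) : Prop :=
  exists j, meets Z j /\ cubeN j N x.
End Cubes.

Definition frakn : int := Num.ceil (Num.sqrt (n%:R : R) - 1).
Definition frakm : int := Num.ceil (2 * Num.sqrt (n%:R : R)).
Definition frakN : int := frakn + frakm.

Definition Fset (k : nat) (X Y : {fset pt}) (eps : R) : {fset pt} :=
  [fset p in Y | `[< (exists C, C \in Dstar k Y eps /\ p \in C /\
                         thicken eps (bdry eps X C) frakN p)
                     \/ p \in noise k Y eps >]].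

(* W x y = Some w : edge {x,y} of weight w ; None : no edge *)
Record wgraph := WGraph { gV : {fset pt}; gW : pt -> pt -> option R }.

Definition omin (a b : option R) : option R :=
  match a, b with
  | Some x, Some y => Some (Num.min x y)
  | Some x, None => Some x
  | None, b => b
  end.

Definition gcomplete (Z : {fset pt}) (w : pt -> pt -> option R) : wgraph :=
  WGraph Z (fun p q => if [&& p \in Z, q \in Z & p != q] then w p q else None).

Definition gtrunc (alpha : R) (G : wgraph) : wgraph :=
  WGraph (gV G) (fun p q => match gW G p q with
                            | Some w => if w <= alpha then Some w else None
                            | None => None end).

Definition gunion (G H : wgraph) : wgraph :=
  WGraph (gV G `|` gV H) (fun p q => omin (gW G p q) (gW H p q)).

Definition gempty : wgraph := WGraph fset0 (fun _ _ => None).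

Definition gbigunion (s : seq wgraph) : wgraph := foldr gunion gempty s.

Definition gconn (G : wgraph) (p q : pt) : Prop :=
  p \in gV G /\ q \in gV G /\
  exists s : seq pt, path (fun x y => gW G x y != None) p s /\ last p s = q.

Section Construction.
Variables (k : nat) (X : {fset pt}) (e : nat -> R).

(* Xs m = X_{m+1} *)
Fixpoint Xs (m : nat) : {fset pt} :=
  match m with
  | 0 => X
  | m'.+1 => Fset k X (Xs m') (e m'.+1)
  end.

Definition Ball (Y : {fset pt}) (eps : R) (C : {fset pt}) : {fset pt} :=
  [fset y in Y | `[< exists c, c \in C /\ (dist y c <= eps)%R >]].

Fixpoint Hg (m : nat) : wgraph :=
  match m with
  | 0 => WGraph X (fun _ _ => None)
  | m'.+1 =>
      gunion
        (gbigunion [seq gtrunc (e m'.+1)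
                       (gcomplete (Ball (Xs m') (e m'.+1) C)
                                  (rho k (Ball (Xs m') (e m'.+1) C)))
                   | C <- enum_fset (Dstar k (Xs m') (e m'.+1))])
        (Hg m')
  end.

Definition Fg (i : nat) : wgraph := gunion (gcomplete (Xs i) (rho k (Xs i))) (Hg i).
End Construction.
End DBSCAN.

From HB Require Import structures.
From mathcomp Require Import all_boot all_order all_algebra.
From mathcomp Require Import finmap.
From mathcomp Require Import boolp reals.
From mathcomp Require Import ring lra zify.
From Stdlib Require Import Relation_Operators.
Set Implicit Arguments. Unset Strict Implicit. Unset Printing Implicit Defensive.
Import Order.TTheory GRing.Theory Num.Theory.
Local Open Scope fset_scope.
Local Open Scope ring_scope.

(* Every edge of H(i) or F(i) of weight at most v is an edge of G(X, rho^X)_v, because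
   core distances only decrease when the point set grows.  Conversely, an edge p q of
   G(X_m, rho)_v with v >= eps_m is replaced by a path: an endpoint lying in a cluster C of
   D*(X_m, eps_m) is joined inside C, by edges of H(m), to the point of C nearest to the
   other endpoint; that point lies within N cubes of the boundary of C (walk cube by cube
   towards the other endpoint until leaving the interior cubes), so it survives in
   X_(m+1), and so do the noise points, whose neighbour counts do not drop.  Iterating
   down to X_j with eps_(j-1) < v <= eps_j, the remaining edges of G(X_j, rho)_v join two
   core points of one cluster of D*(X_j, eps_j), hence are edges of H(j). *)

Lemma cauchy_schwarz_sqrt (R : rcfType) (I : finType) (a b : I -> R) :
  \sum_i a i * b i <= Num.sqrt (\sum_i a i ^+ 2) * Num.sqrt (\sum_i b i ^+ 2).
Proof.
have sqr_sum_ge0 (c : I -> R) : 0 <= \sum_i c i ^+ 2.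
  by apply: sumr_ge0 => i _; exact: sqr_ge0.
case: (lerP (\sum_i a i * b i) 0) => [ab_le0|ab_gt0].
  exact: le_trans ab_le0 (mulr_ge0 (sqrtr_ge0 _) (sqrtr_ge0 _)).
rewrite -sqrtrM ?sqr_sum_ge0 // -(ger0_norm (ltW ab_gt0)) -sqrtr_sqr ler_wsqrtr //.
have lagrange : \sum_i \sum_j (a i * b j - a j * b i) ^+ 2 =
    2 * ((\sum_i a i ^+ 2) * (\sum_i b i ^+ 2) - (\sum_i a i * b i) ^+ 2).
  have row_sum i : \sum_j (a i * b j - a j * b i) ^+ 2 =
      a i ^+ 2 * (\sum_j b j ^+ 2) + b i ^+ 2 * (\sum_j a j ^+ 2)
      - 2 * (a i * b i) * (\sum_j a j * b j).
    have term j : (a i * b j - a j * b i) ^+ 2 =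
        a i ^+ 2 * b j ^+ 2 + b i ^+ 2 * a j ^+ 2 - 2 * (a i * b i) * (a j * b j).
      by ring.
    by rewrite (eq_bigr _ (fun j _ => term j)) sumrB big_split /= !mulr_sumr.
  rewrite (eq_bigr _ (fun i _ => row_sum i)) sumrB big_split /= -!mulr_suml.
  by rewrite -mulr_sumr expr2; ring.
have : 0 <= \sum_i \sum_j (a i * b j - a j * b i) ^+ 2.
  by apply: sumr_ge0 => i _; exact: sqr_sum_ge0.
by rewrite lagrange pmulr_rge0 // subr_ge0.
Qed.

Section EuclideanDistance.
Variables (R : realType) (n : nat).
Local Notation pt := (pt R n).
Local Notation dist := (@dist R n).

Lemma dist_ge0 (p q : pt) : 0 <= dist p q.
Proof. exact: sqrtr_ge0. Qed.

Lemma distC (p q : pt) : dist p q = dist q p.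
Proof. by congr Num.sqrt; apply: eq_bigr => i _; rewrite -sqrrN opprB. Qed.

Lemma distxx (p : pt) : dist p p = 0.
Proof. by rewrite /dist big1 ?sqrtr0 // => i _; rewrite subrr expr0n. Qed.

Lemma dist_triangle (p q r : pt) : dist p r <= dist p q + dist q r.
Proof.
set a := fun i : 'I_n => p ord0 i - q ord0 i.
set b := fun i : 'I_n => q ord0 i - r ord0 i.
have sqr_sum_ge0 (c : 'I_n -> R) : 0 <= \sum_i c i ^+ 2.
  by apply: sumr_ge0 => i _; exact: sqr_ge0.
rewrite /dist -(ger0_norm (addr_ge0 (sqrtr_ge0 _) (sqrtr_ge0 _))) -sqrtr_sqr.
apply: ler_wsqrtr; rewrite sqrrD !sqr_sqrtr ?sqr_sum_ge0 //.
have -> : \sum_(i < n) (p ord0 i - r ord0 i) ^+ 2 =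
    \sum_i a i ^+ 2 + 2 * \sum_i a i * b i + \sum_i b i ^+ 2.
  by rewrite mulr_sumr -!big_split /=; apply: eq_bigr => i _; rewrite /a /b; ring.
have := cauchy_schwarz_sqrt a b; rewrite -/(dist p q) -/(dist q r) mulr2n.
lra.
Qed.

Lemma coord_le_dist (p q : pt) (i : 'I_n) : `|p ord0 i - q ord0 i| <= dist p q.
Proof.
rewrite -sqrtr_sqr ler_wsqrtr // (bigD1 i) //= lerDl.
by apply: sumr_ge0 => j _; exact: sqr_ge0.
Qed.

Lemma dist_gt0 (p q : pt) : p != q -> 0 < dist p q.
Proof.
apply: contraNT; rewrite -leNgt => dist_le0; apply/eqP/rowP => i.
have := le_trans (coord_le_dist p q i) dist_le0.
by rewrite normr_le0 subr_eq0 => /eqP.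
Qed.

Lemma dist_le_box (p q : pt) (s : R) : 0 <= s ->
  (forall i, `|p ord0 i - q ord0 i| <= s) -> dist p q <= s * Num.sqrt n%:R.
Proof.
move=> s_ge0 box; rewrite -(ger0_norm s_ge0) -sqrtr_sqr -sqrtrM ?sqr_ge0 //.
apply: ler_wsqrtr.
have -> : s ^+ 2 * n%:R = \sum_(i < n) s ^+ 2 by rewrite sumr_const card_ord mulr_natr.
apply: ler_sum => i _; rewrite -real_normK ?num_real //.
by rewrite lerXn2r ?nnegrE ?normr_ge0 ?(le_trans _ (box i)).
Qed.

Lemma dist_segment (w z : pt) (t : R) : 0 <= t <= dist w z ->
  exists y : pt, dist w y = t /\ dist y z = dist w z - t.
Proof.
move=> /andP[t_ge0 t_le].
have [wz|wz] := eqVneq w z; first subst z.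
  have t0 : t = 0 by move: t_le; rewrite distxx; lra.
  by exists w; rewrite t0 distxx subr0.
have d_gt0 := dist_gt0 wz; set l := t / dist w z.
have scaled (a b u v : pt) (c : R) : 0 <= c ->
    (forall i, a ord0 i - b ord0 i = c * (u ord0 i - v ord0 i)) ->
    dist a b = c * dist u v.
  move=> c_ge0 h; rewrite /dist -(ger0_norm c_ge0) -sqrtr_sqr -sqrtrM ?sqr_ge0 //.
  by congr Num.sqrt; rewrite mulr_sumr; apply: eq_bigr => i _; rewrite h exprMn.
exists (w + l *: (z - w)); split.
  rewrite distC (@scaled _ _ z w l) ?divr_ge0 ?dist_ge0 //.
    by rewrite distC /l divfK ?gt_eqF.
  by move=> i; rewrite !mxE; ring.
rewrite (@scaled _ _ w z (1 - l)).
- by rewrite mulrBl mul1r /l divfK ?gt_eqF.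
- by rewrite subr_ge0 /l ler_pdivrMr // mul1r.
- by move=> i; rewrite !mxE; ring.
Qed.

End EuclideanDistance.

Lemma sorted_nth_le_count d (T : orderType d) (x0 v : T) (s : seq T) :
  sorted <=%O s -> forall j, (j < size s)%N ->
  (nth x0 s j <= v)%O = (j < count (fun x => x <= v)%O s)%N.
Proof.
elim: s => [|x s IH] //= x_path j j_lt.
have s_sorted : sorted <=%O s := path_sorted x_path.
have x_min : all (fun y => x <= y)%O s by apply: order_path_min => //; exact: le_trans.
have none_le : ~~ (x <= v)%O -> count (fun y => y <= v)%O s = 0%N.
  move=> x_gtv; apply/eqP; rewrite -leqn0 leqNgt -has_count; apply/hasP => -[y ys y_le].
  by move/allP: x_min => /(_ y ys) /le_trans /(_ y_le); rewrite (negbTE x_gtv).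
by case: j j_lt => [|j] j_lt /=; rewrite ?IH //; case x_le: (x <= v)%O => //=;
  rewrite none_le ?x_le.
Qed.

Lemma card_fset_sep (T : choiceType) (Z : {fset T}) (P : pred T) :
  #|` [fset z in Z | P z] | = count P (enum_fset Z).
Proof.
have -> : [fset z in Z | P z] = [fset x in [seq z <- enum_fset Z | P z]].
  by apply/fsetP => x; rewrite !inE mem_filter andbC.
by rewrite card_fseq undup_id ?size_filter ?filter_uniq ?fset_uniq.
Qed.

Lemma seq_argmin (T : eqType) d (U : orderType d) (f : T -> U) (s : seq T) c0 :
  c0 \in s -> exists2 c, c \in s & forall c', c' \in s -> (f c <= f c')%O.
Proof.
rewrite -index_mem => c0_lt.
have [i _ i_min] := @arg_minP _ _ _ (Ordinal c0_lt) xpredT (fun i => f (nth c0 s i)) isT.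
exists (nth c0 s i) => [|c' c'_in]; first exact: mem_nth.
have c'_lt : (index c' s < size s)%N by rewrite index_mem.
by have := i_min (Ordinal c'_lt) isT; rewrite /= nth_index.
Qed.

Section CoreDistance.
Variables (R : realType) (n k : nat).
Local Notation pt := (pt R n).
Local Notation dist := (@dist R n).

Definition nbr_count (Z : {fset pt}) (p : pt) (v : R) : nat :=
  #|` [fset z in Z | (z != p) && (dist p z <= v)] |.

Lemma coredist_le_iff (Z : {fset pt}) p v : 0 <= v ->
  (exists2 a, coredist k Z p = Some a & a <= v) <-> (k <= nbr_count Z p v)%N.
Proof.
move=> v_ge0; rewrite /coredist; case: eqP => [->|/eqP k_neq0].
  by split => // _; exists 0.
set s := sort _ _.
have s_sorted : sorted <=%R s by apply: sort_sorted; exact: le_total.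
have -> : nbr_count Z p v = count (fun x => x <= v) s.
  rewrite /nbr_count card_fset_sep (permP (permEl (perm_sort _ _))) count_map count_filter.
  by apply: eq_count => z /=; rewrite andbC.
have k_gt0 : (0 < k)%N by rewrite lt0n.
case: ifP => k_le /=.
  have j_lt : (k.-1 < size s)%N by rewrite prednK.
  have -> : (k <= count (fun x => x <= v)%R s)%N = (k.-1 < count (fun x => x <= v)%R s)%N.
    by rewrite prednK.
  rewrite -(sorted_nth_le_count 0 v s_sorted j_lt).
  by split => [[a [<-]]|]; last exists (nth 0 s k.-1).
split=> [[]//|k_le_cnt].
by move: (leq_trans k_le_cnt (count_size _ _)); rewrite k_le.
Qed.

Lemma nbr_count_le (Y Z : {fset pt}) p v :
  (forall z, z \in Y -> z != p -> dist p z <= v -> z \in Z) ->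
  (nbr_count Y p v <= nbr_count Z p v)%N.
Proof.
move=> YZ; apply: fsubset_leq_card; apply/fsubsetP => x; rewrite !inE.
by move=> /and3P[xY xp x_near]; rewrite xp x_near (YZ x xY xp x_near).
Qed.

Lemma nbr_count_mono (Y Z : {fset pt}) p u v : Y `<=` Z -> u <= v ->
  (nbr_count Y p u <= nbr_count Z p v)%N.
Proof.
move=> YZ uv; apply: fsubset_leq_card; apply/fsubsetP => x; rewrite !inE.
by move=> /and3P[/(fsubsetP YZ) -> -> /le_trans ->].
Qed.

End CoreDistance.

Section ReflexiveTransitiveClosure.
Variables (T : Type) (e : T -> T -> Prop).
Local Notation conn := (clos_refl_trans T).

Lemma clos_rt_sub (e' : T -> T -> Prop) :
  (forall x y, e x y -> conn e' x y) -> forall x y, conn e x y -> conn e' x y.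
Proof. by move=> ee' x y; elim=> [||? ? ? _ ? _]; [exact: ee'|exact: rt_refl|exact: rt_trans]. Qed.

Lemma clos_rt_sym : (forall x y, e x y -> e y x) -> forall x y, conn e x y -> conn e y x.
Proof.
move=> e_sym x y; elim=> [? ? /e_sym|?|? ? ? _ yx _ zy]; [exact: rt_step|exact: rt_refl|].
exact: rt_trans zy yx.
Qed.

Lemma path_clos_rtP (r : rel T) x y :
  (exists s, path r x s /\ last x s = y) <-> conn r x y.
Proof.
split=> [[s []]|].
  elim: s x => [|z s IH] x /=; first by move=> _ ->; exact: rt_refl.
  by move=> /andP[xz zs] s_y; apply: rt_trans (rt_step _ _ _ _ xz) (IH _ zs s_y).
elim=> [x' y' xy|x'|x' y' z' _ [s1 [p1 l1]] _ [s2 [p2 l2]]].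
- by exists [:: y'] => /=; rewrite xy.
- by exists [::].
- by exists (s1 ++ s2); rewrite cat_path last_cat l1 p1 p2.
Qed.

End ReflexiveTransitiveClosure.

Section WeightedGraphs.
Variables (R : realType) (n : nat).
Local Notation pt := (pt R n).
Local Notation wgraph := (wgraph R n).
Local Notation conn := (clos_refl_trans pt).

Definition edge_le (G : wgraph) (v : R) (p q : pt) : Prop :=
  exists2 w, gW G p q = Some w & w <= v.

Lemma edge_le_mono (G : wgraph) u v p q : u <= v -> edge_le G u p q -> edge_le G v p q.
Proof. by move=> uv [w pq wu]; exists w => //; exact: le_trans wu uv. Qed.

Lemma gconn_truncE (G : wgraph) v p q :
  gconn (gtrunc v G) p q <-> [/\ p \in gV G, q \in gV G & conn (edge_le G v) p q].
Proof.
have edgeE x y : gW (gtrunc v G) x y != None <-> edge_le G v x y.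
  rewrite /edge_le /=; case: (gW G x y) => [w|] /=; last by split => // -[].
  case: ifP => w_le; split => //; first by exists w.
  by case=> w' [<-]; rewrite w_le.
rewrite /gconn /=; split=> [[p_in [q_in /path_clos_rtP]]|[p_in q_in]].
  by move=> pq; split => //; apply: clos_rt_sub pq => x y /edgeE; exact: rt_step.
move=> pq; split => //; split => //; apply/path_clos_rtP.
by apply: clos_rt_sub pq => x y /edgeE; exact: rt_step.
Qed.

Lemma edge_le_trunc (G : wgraph) a v p q :
  edge_le (gtrunc a G) v p q <-> edge_le G (Num.min a v) p q.
Proof.
rewrite /edge_le /=; case: (gW G p q) => [w|]; last by split => -[].
case: ifP => w_le; last by split=> [[]//|[w' [<-]]]; rewrite le_min w_le.
split=> [[w' [<-] w_lev]|[w' [<-]]]; first by exists w; rewrite // le_min w_le.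
by rewrite le_min => /andP[_ w_lev]; exists w.
Qed.

Lemma edge_le_union (G H : wgraph) v p q :
  edge_le (gunion G H) v p q <-> edge_le G v p q \/ edge_le H v p q.
Proof.
rewrite /edge_le /= /omin; case: (gW G p q) => [a|]; case: (gW H p q) => [b|].
- split=> [[w [<-]]|[[w [<-] a_le]|[w [<-] b_le]]].
  + by rewrite ge_min => /orP[]; [left; exists a|right; exists b].
  + by exists (Num.min a b) => //; rewrite ge_min a_le.
  + by exists (Num.min a b) => //; rewrite ge_min b_le orbT.
- by split=> [[w [<-] ?]|[[w [<-] ?]|[]]] //; [left|]; exists a.
- by split=> [[w [<-] ?]|[[]|[w [<-] ?]]] //; [right|]; exists b.
- by split=> [[]|[[]|[]]].
Qed.

Lemma edge_le_bigunion (f : {fset pt} -> wgraph) (s : seq {fset pt}) v p q :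
  edge_le (gbigunion [seq f C | C <- s]) v p q <-> exists2 C, C \in s & edge_le (f C) v p q.
Proof.
elim: s => [|C s IH] /=; first by split=> [[]|[]].
rewrite edge_le_union IH; split=> [[pq|[C' C's pq]]|[C']].
- by exists C; rewrite ?mem_head.
- by exists C'; rewrite // inE C's orbT.
- by rewrite inE => /orP[/eqP ->|C's pq]; [left|right; exists C'].
Qed.

Lemma edge_le_complete (Z : {fset pt}) w v p q :
  edge_le (gcomplete Z w) v p q <->
  [/\ p \in Z, q \in Z, p != q & exists2 a, w p q = Some a & a <= v].
Proof.
rewrite /edge_le /=; case: ifP => [/and3P[p_in q_in pq]|pqZ]; first by split=> [|[]].
by split=> [[]|[p_in q_in pq]] //; rewrite p_in q_in pq in pqZ.
Qed.

End WeightedGraphs.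

Section MutualReachability.
Variables (R : realType) (n k : nat).
Local Notation pt := (pt R n).
Local Notation dist := (@dist R n).
Local Notation nbr_count := (@nbr_count R n).

(* The edge relation of G(Z, rho^Z)_v (see edge_le_rho); rho is the mutual
   reachability distance of HDBSCAN. *)
Definition mr_edge (Z : {fset pt}) (v : R) (p q : pt) : Prop :=
  [/\ p \in Z, q \in Z & p != q] /\
  [/\ (k <= nbr_count Z p v)%N, (k <= nbr_count Z q v)%N & dist p q <= v].

Lemma rho_sym (Z : {fset pt}) p q : rho k Z p q = rho k Z q p.
Proof.
rewrite /rho eq_sym; case: eqP => // _.
by case: (coredist k Z p) => [a|]; case: (coredist k Z q) => [b|] //; rewrite distC maxCA.
Qed.

Lemma rho_le_iff (Z : {fset pt}) p q v : p != q -> 0 <= v ->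
  (exists2 a, rho k Z p q = Some a & a <= v) <->
  [/\ (k <= nbr_count Z p v)%N, (k <= nbr_count Z q v)%N & dist p q <= v].
Proof.
move=> pq v_ge0; rewrite /rho (negbTE pq).
have cp := coredist_le_iff k Z p v_ge0; have cq := coredist_le_iff k Z q v_ge0.
case: (coredist k Z p) cp => [a|] cp; last by split=> [[]//|[/cp[]]].
case: (coredist k Z q) cq => [b|] cq; last by split=> [[]//|[_ /cq[]]].
split=> [[w [<-]]|[/cp[_ [<-] ap] /cq[_ [<-] bq] pq_le]].
  rewrite !ge_max => /and3P[ap bq pq_le].
  by split => //; [apply/cp; exists a|apply/cq; exists b].
by exists (Num.max a (Num.max b (dist p q))); rewrite // !ge_max ap bq pq_le.
Qed.

Lemma edge_le_rho (Z : {fset pt}) v p q : 0 <= v ->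
  edge_le (gcomplete Z (rho k Z)) v p q <-> mr_edge Z v p q.
Proof.
move=> v_ge0; rewrite edge_le_complete; split.
  by move=> [p_in q_in pq /(rho_le_iff _ pq v_ge0)].
by move=> [[p_in q_in pq] /(rho_le_iff _ pq v_ge0)].
Qed.

Lemma mr_edge_mono (Y Z : {fset pt}) u v p q : Y `<=` Z -> u <= v ->
  mr_edge Y u p q -> mr_edge Z v p q.
Proof.
move=> YZ uv [[p_in q_in pq] [cp cq pq_le]]; split; split => //.
- exact: fsubsetP YZ _ p_in.
- exact: fsubsetP YZ _ q_in.
- exact: leq_trans cp (nbr_count_mono _ YZ uv).
- exact: leq_trans cq (nbr_count_mono _ YZ uv).
- exact: le_trans pq_le uv.
Qed.

End MutualReachability.

Lemma in_fset_sep (T : choiceType) (A : {fset T}) (P : pred T) x :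
  (x \in [fset y in A | P y]) = (x \in A) && P x.
Proof. by rewrite inE. Qed.

Lemma in_fset_asbool (T : choiceType) (A : {fset T}) (P : T -> Prop) x :
  x \in [fset y in A | `[< P y >]] <-> x \in A /\ P x.
Proof. by rewrite in_fset_sep; split => [/andP[-> /asboolP]|[-> /asboolP]]. Qed.

Section Clusters.
Variables (R : realType) (n k : nat).
Local Notation pt := (pt R n).
Local Notation dist := (@dist R n).
Local Notation nbr_count := (@nbr_count R n).

Lemma in_coreset (Y : {fset pt}) eps p : 0 <= eps ->
  (p \in coreset k Y eps) = (p \in Y) && (k <= nbr_count Y p eps)%N.
Proof.
move=> eps_ge0; rewrite !inE /=; case p_in: (p \in Y) => //=.
rewrite (cardfsD1 p) !inE p_in /= distxx eps_ge0 /= add1n ltnS.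
by congr (_ <= #|` _|)%N; apply/fsetP => z; rewrite !inE andbCA.
Qed.

Lemma coreset_sub (Y : {fset pt}) eps : coreset k Y eps `<=` Y.
Proof. by apply/fsubsetP => p; rewrite inE => /andP[]. Qed.

Lemma in_compC (Y : {fset pt}) eps p q :
  q \in compC k Y eps p <-> q \in coreset k Y eps /\ reachC k Y eps p q.
Proof. exact: in_fset_asbool. Qed.

Lemma in_Dstar (Y : {fset pt}) eps C :
  C \in Dstar k Y eps <-> exists2 p, p \in coreset k Y eps & C = compC k Y eps p.
Proof. by split => [/imfsetP[p /= p_in ->]|[p p_in ->]]; [exists p|apply/imfsetP; exists p]. Qed.

Lemma in_Ball (Y : {fset pt}) eps C y :
  y \in Ball Y eps C <-> y \in Y /\ exists c, c \in C /\ dist y c <= eps.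
Proof. exact: in_fset_asbool. Qed.

Lemma Ball_sub (Y : {fset pt}) eps C : Ball Y eps C `<=` Y.
Proof. by apply/fsubsetP => p /in_Ball[]. Qed.

Lemma in_Fset (X Y : {fset pt}) eps p :
  p \in Fset k X Y eps <-> p \in Y /\
    ((exists C, C \in Dstar k Y eps /\ p \in C /\ thicken eps (bdry eps X C) (frakN R n) p)
     \/ p \in noise k Y eps).
Proof. exact: in_fset_asbool. Qed.

Lemma Fset_sub (X Y : {fset pt}) eps : Fset k X Y eps `<=` Y.
Proof. by apply/fsubsetP => p /in_Fset[]. Qed.

Lemma Dstar_sub_coreset (Y : {fset pt}) eps C :
  C \in Dstar k Y eps -> C `<=` coreset k Y eps.
Proof. by move=> /in_Dstar[p _ ->]; apply/fsubsetP => q /in_compC[]. Qed.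

Lemma Dstar_sub (Y : {fset pt}) eps C : C \in Dstar k Y eps -> C `<=` Y.
Proof. by move/Dstar_sub_coreset/fsubset_trans; apply; exact: coreset_sub. Qed.

Lemma compC_self (Y : {fset pt}) eps p : p \in coreset k Y eps ->
  compC k Y eps p \in Dstar k Y eps /\ p \in compC k Y eps p.
Proof.
by move=> p_core; split; [apply/in_Dstar; exists p|apply/in_compC; split => //; exists [::]].
Qed.

Lemma Dstar_closed (Y : {fset pt}) eps C c z : C \in Dstar k Y eps -> c \in C ->
  z \in coreset k Y eps -> dist c z <= eps -> z \in C.
Proof.
move=> /in_Dstar[p _ ->] /in_compC[c_core [s [s_path s_last]]] z_core cz.
apply/in_compC; split => //; exists (rcons s z).
by rewrite rcons_path s_path s_last c_core z_core cz last_rcons.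
Qed.

Lemma notin_Dstar (Y : {fset pt}) eps C x : C \in Dstar k Y eps ->
  x \notin coreset k Y eps -> x \notin C.
Proof. by move=> /Dstar_sub_coreset/fsubsetP C_core; apply: contra => /C_core. Qed.

Lemma mr_edge_Ball (Y C : {fset pt}) eps v x y : C `<=` Y -> v <= eps ->
  x \in C -> y \in C -> mr_edge k Y v x y -> mr_edge k (Ball Y eps C) v x y.
Proof.
move=> /fsubsetP CY v_le x_in y_in [[_ _ xy] [cx cy xy_le]].
have eps_ge0 : 0 <= eps := le_trans (dist_ge0 x y) (le_trans xy_le v_le).
have in_Ball_C c : c \in C -> c \in Ball Y eps C.
  by move=> c_in; apply/in_Ball; split; [exact: CY|exists c; rewrite distxx].
have count_Ball c : c \in C -> (nbr_count Y c v <= nbr_count (Ball Y eps C) c v)%N.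
  move=> c_in; apply: nbr_count_le => z z_in _ cz; apply/in_Ball; split => //.
  by exists c; split => //; rewrite distC; exact: le_trans cz v_le.
split; split; rewrite ?in_Ball_C //.
- exact: leq_trans cx (count_Ball _ x_in).
- exact: leq_trans cy (count_Ball _ y_in).
Qed.

End Clusters.

Lemma clamp_interval (R : realFieldType) (a b M s z : R) : 0 < s -> `|a - b| <= M ->
  b * s <= z <= (b + 1) * s ->
  let c := Num.min (Num.max z (a * s)) ((a + 1) * s) in
  a * s <= c <= (a + 1) * s /\ `|z - c| <= M * s.
Proof.
move=> s_gt0 /[dup] ab_le; rewrite ler_norml => /andP[ab_lo ab_hi] /andP[z_lo z_hi] c.
have M_ge0 : 0 <= M := le_trans (normr_ge0 _) ab_le.
have abs : (a - b) * s <= M * s /\ (b - a) * s <= M * s by rewrite !ler_pM2r //; lra.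
have as_le : a * s <= (a + 1) * s by rewrite ler_pM2r // lerDl.
move: z_hi as_le; rewrite /c !mulrDl !mul1r => z_hi as_le.
case: (lerP z (a * s)) => [z_le|a_lt].
  rewrite (min_idPl as_le) lexx as_le ler_norml; split => //; apply/andP; split; lra.
case: (lerP z (a * s + s)) => [z_le|z_gt].
  by rewrite subrr normr0 (ltW a_lt) z_le mulr_ge0 // ltW.
rewrite lexx as_le ler_norml; split => //; apply/andP; split; lra.
Qed.

Lemma sgz_le1 (d : int) : `|sgz d| <= 1.
Proof. by case: sgzP. Qed.

Lemma sgz_step (d : int) (L : nat) : `|d| <= L.+1%:Z -> `|sgz d - d| <= L%:Z.
Proof. by case: sgzP; lia. Qed.

Section Cubes.
Variables (R : realType) (n : nat) (eps : R).
Hypotheses (n_gt0 : (0 < n)%N) (eps_gt0 : 0 < eps).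
Local Notation pt := (pt R n).
Local Notation dist := (@dist R n).
Local Notation s := (side n eps).
Local Notation cube := (cube eps).
Local Notation meets := (meets eps).

Lemma sqrt_dim_ge1 : 1 <= Num.sqrt (n%:R : R).
Proof. by rewrite -[leLHS]sqrtr1; apply: ler_wsqrtr; rewrite ler1n. Qed.

Lemma side_gt0 : 0 < s.
Proof. by rewrite divr_gt0 // mulr_gt0 // (lt_le_trans ltr01 sqrt_dim_ge1). Qed.

Lemma eps_side : eps = 2 * Num.sqrt n%:R * s.
Proof. by rewrite mulrC divfK // gt_eqF // mulr_gt0 // (lt_le_trans ltr01 sqrt_dim_ge1). Qed.

Definition cube_index (x : pt) : 'I_n -> int := fun i => Num.floor (x ord0 i / s).

Lemma cube_index_cube x : cube (cube_index x) x.
Proof.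
move=> i; have s_gt0 := side_gt0.
rewrite -ler_pdivlMr // floor_le //= -ler_pdivrMr //; exact/ltW/floorD1_gt.
Qed.

Lemma cube_coord_close (J : 'I_n -> int) u y i : cube J u -> cube J y ->
  `|u ord0 i - y ord0 i| <= s.
Proof.
move=> /(_ i) /andP[u_lo u_hi] /(_ i) /andP[y_lo y_hi].
by move: u_hi y_hi; rewrite intrD mulrDl mul1r ler_norml => *; apply/andP; split; lra.
Qed.

Lemma cubeN_near (J K : 'I_n -> int) (M : int) x :
  (forall i, `|J i - K i| <= M) -> cube K x -> cubeN eps J M x.
Proof.
move=> JK x_in; have s_gt0 := side_gt0.
have clamp i := @clamp_interval _ (J i)%:~R (K i)%:~R M%:~R s (x ord0 i) s_gt0.
have JK_R i : `|(J i)%:~R - (K i)%:~R| <= M%:~R :> R by rewrite -intrB -intr_norm ler_int.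
have x_in_R i : (K i)%:~R * s <= x ord0 i <= ((K i)%:~R + 1) * s.
  by have := x_in i; rewrite intrD.
exists (\row_i Num.min (Num.max (x ord0 i) ((J i)%:~R * s)) (((J i)%:~R + 1) * s)).
split => i; rewrite mxE; have [in_J close] := clamp i (JK_R i) (x_in_R i) => //.
by rewrite intrD.
Qed.

(* Cubes that cannot be adjacent to an interior cube of C. *)
Definition outer_cube (X C : {fset pt}) (K : 'I_n -> int) : Prop :=
  ~ meets (fun x => x \in C) K \/ exists x, [/\ x \in X, x \notin C & cube K x].

Lemma interior_cube_not_near_outer (X C : {fset pt}) J K : interior_cube eps X C J ->
  (forall i, `|J i - K i| <= 1) -> ~ outer_cube X C K.
Proof.
move=> [_ [nbr_in_C nbr_meet]] JK [|[x [x_in x_notin x_K]]].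
  by apply; apply: nbr_meet => x; apply: cubeN_near.
by move: x_notin; rewrite (nbr_in_C x x_in (cubeN_near JK x_K)).
Qed.

(* Walk from J towards K, one diagonal step at a time: as long as the current cube is
   interior its neighbours meet C, and it is never adjacent to the outer cube K. *)
Lemma boundary_cube_toward (X C : {fset pt}) (L : nat) J K :
  meets (fun x => x \in C) J -> (forall i, `|J i - K i| <= L%:Z) -> outer_cube X C K ->
  exists B, boundary_cube eps X C B /\ forall i, `|B i - J i| <= (L.-1)%:Z.
Proof.
elim: L J => [|L IH] J J_meets JK K_outer;
  (case: (pselect (interior_cube eps X C J)) => J_int;
   last by exists J; split => // i; rewrite subrr).
  by case: (interior_cube_not_near_outer J_int _ K_outer) => i; have := JK i; lia.
have [i0 far] : exists i, ~ (`|J i - K i| <= 1).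
  apply: contra_notP (interior_cube_not_near_outer J_int^~ K_outer) => near i.
  by apply: contra_notP near => ?; exists i.
pose J1 i := J i + sgz (K i - J i).
have JJ1 i : `|J i - J1 i| <= 1 by rewrite /J1 opprD addrA subrr add0r normrN sgz_le1.
have J1_meets : meets (fun x => x \in C) J1.
  by case: J_int => [_ [_ nbr_meet]]; apply: nbr_meet => x; apply: cubeN_near.
have J1K i : `|J1 i - K i| <= L%:Z.
  have -> : J1 i - K i = sgz (K i - J i) - (K i - J i) by rewrite /J1; ring.
  by apply: sgz_step; rewrite distrC.
have [B [B_bdry BJ1]] := IH J1 J1_meets J1K K_outer.
by exists B; split => // i; have := BJ1 i; have := JJ1 i; have := JK i0; move: far; lia.
Qed.

Lemma thicken_bdry_of_boundary_cube (X C : {fset pt}) B z (N : nat) :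
  boundary_cube eps X C B -> (forall i, `|B i - cube_index z i| <= N.+1%:Z) ->
  thicken eps (bdry eps X C) N%:Z z.
Proof.
move=> B_bdry Bz; pose j i := B i + sgz (cube_index z i - B i).
have jB i : `|j i - B i| <= 1 by rewrite /j addrC addKr sgz_le1.
pose corner : pt := \row_i ((Num.max (j i) (B i))%:~R * s).
have corner_in (a : 'I_n -> int) : (forall i, a i = j i \/ a i = B i) -> cube a corner.
  move=> a_jB i; rewrite mxE ler_pM2r ?side_gt0 // ler_pM2r ?side_gt0 // !ler_int.
  by have := jB i; case: (a_jB i) => ->; rewrite /Num.max; case: ifP; lia.
exists j; split.
  exists corner; split; last by apply: corner_in => i; left.
  by exists B; split => //; apply: corner_in => i; right.
apply: cubeN_near (cube_index_cube z) => i.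
have -> : j i - cube_index z i = sgz (cube_index z i - B i) - (cube_index z i - B i).
  by rewrite /j; ring.
by apply: sgz_step; rewrite distrC.
Qed.

Lemma thicken_bdry_of_outer_cube (X C : {fset pt}) K z (N : nat) :
  z \in C -> outer_cube X C K -> (forall i, `|cube_index z i - K i| <= N.+2%:Z) ->
  thicken eps (bdry eps X C) N%:Z z.
Proof.
move=> z_in K_outer zK.
have z_meets : meets (fun x => x \in C) (cube_index z).
  by exists z; split; last exact: cube_index_cube.
have [B [B_bdry Bz]] := boundary_cube_toward z_meets zK K_outer.
exact: thicken_bdry_of_boundary_cube B_bdry Bz.
Qed.

Lemma frakN_ge : 3 * Num.sqrt (n%:R : R) - 1 <= (frakN R n)%:~R.
Proof.
rewrite intrD; have := ceil_ge (Num.sqrt (n%:R : R) - 1).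
by have := ceil_ge (2 * Num.sqrt (n%:R : R)); lra.
Qed.

Lemma frakN_ge0 : 0 <= frakN R n.
Proof. by have := frakN_ge; have := sqrt_dim_ge1; rewrite -(ler_int R); lra. Qed.

Lemma cube_index_close (x y : pt) :
  dist x y <= 3 * Num.sqrt n%:R * s + s / 2 ->
  forall i, `|cube_index x i - cube_index y i| <= frakN R n + 2.
Proof.
move=> xy i; have s_gt0 := side_gt0; set N := frakN R n.
have coord : `|x ord0 i / s - y ord0 i / s| <= N%:~R + 3 / 2.
  rewrite -mulrBl normrM (@gtr0_norm _ s^-1) ?invr_gt0 // ler_pdivrMr //.
  have : (3 * Num.sqrt n%:R - 1) * s <= N%:~R * s by rewrite ler_pM2r // frakN_ge.
  by have := coord_le_dist x y i; lra.
have : `|(cube_index x i - cube_index y i)%:~R : R| < (N + 3)%:~R.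
  have := floor_le (x ord0 i / s); have := floorD1_gt (x ord0 i / s).
  have := floor_le (y ord0 i / s); have := floorD1_gt (y ord0 i / s).
  move: coord; rewrite /cube_index intrB !intrD ler_norml ltr_norml => /andP[? ?] *.
  apply/andP; split; lra.
by rewrite -intr_norm ltr_int; lia.
Qed.

(* If w is far from z, the cube of the point at distance eps + (sqrt n + 1/2) side
   before z on the segment [w, z] misses C; otherwise the cube of w is outer. *)
Lemma outer_cube_near (X C : {fset pt}) w z : w \in X -> w \notin C ->
  (forall c, c \in C -> dist w z - eps <= dist w c) ->
  exists K, outer_cube X C K /\ forall i, `|cube_index z i - K i| <= frakN R n + 2.
Proof.
move=> w_in w_notin z_nearest; have s_gt0 := side_gt0; have r_ge1 := sqrt_dim_ge1.
have eps_rs := eps_side; set r := Num.sqrt (n%:R : R) in r_ge1 eps_rs.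
set t := dist w z - eps - r * s - s / 2.
case: (lerP t 0) => [t_le0|t_gt0].
  exists (cube_index w); split; first by right; exists w; split => //; exact: cube_index_cube.
  by move=> i; rewrite distrC; apply: cube_index_close; move: t_le0; rewrite /t -/r; lra.
have [|y [wy yz]] := @dist_segment _ _ w z t.
  rewrite (ltW t_gt0) /= /t; have : 0 < r * s by rewrite mulr_gt0 // (lt_le_trans ltr01).
  lra.
exists (cube_index y); split.
  left => -[u [u_in u_y]].
  have yu : dist y u <= s * r.
    by apply: dist_le_box => [|i]; [exact: ltW|apply: cube_coord_close (cube_index_cube y) u_y].
  by have := z_nearest u u_in; have := dist_triangle w y u; rewrite wy /t; lra.
by move=> i; rewrite distrC; apply: cube_index_close; rewrite yz /t -/r; lra.
Qed.

(* This is why F keeps, in each cluster, the points nearest to the rest of X. *)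
Lemma almost_nearest_thicken (X C : {fset pt}) w z : w \in X -> w \notin C -> z \in C ->
  (forall c, c \in C -> dist w z - eps <= dist w c) ->
  thicken eps (bdry eps X C) (frakN R n) z.
Proof.
move=> w_in w_notin z_in z_nearest.
have [K [K_outer zK]] := outer_cube_near w_in w_notin z_nearest.
have [N frakN_N] : exists N : nat, frakN R n = N%:Z.
  by exists `|frakN R n|%N; rewrite gez0_abs // frakN_ge0.
rewrite frakN_N in zK *; apply: thicken_bdry_of_outer_cube z_in K_outer _ => i.
by have := zK i; lia.
Qed.

End Cubes.

Section Construction.
Variables (R : realType) (n k : nat) (X : {fset pt R n}) (e : nat -> R).
Hypotheses (n_gt0 : (0 < n)%N) (e0 : e 0%N = 0) (e_incr : forall m, e m < e m.+1).
Local Notation pt := (pt R n).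
Local Notation dist := (@dist R n).
Local Notation nbr_count := (@nbr_count R n).
Local Notation conn := (clos_refl_trans pt).
Local Notation mr_edge := (mr_edge k).
(* [Y m] is the paper's X_(m+1); its clusters at scale e (m+1) give H(m+1). *)
Local Notation Y m := (Xs k X e m).
Local Notation H m := (Hg k X e m).
Local Notation core m := (coreset k (Y m) (e m.+1)).
Local Notation comp m := (compC k (Y m) (e m.+1)).
Local Notation clusters m := (Dstar k (Y m) (e m.+1)).

Lemma e_ge0 m : 0 <= e m.
Proof. by elim: m => [|m IH]; [rewrite e0|exact: le_trans IH (ltW (e_incr m))]. Qed.

Lemma e_succ_gt0 m : 0 < e m.+1.
Proof. exact: le_lt_trans (e_ge0 m) (e_incr m). Qed.

Lemma Xs_succ_sub m : Y m.+1 `<=` Y m.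
Proof. exact: Fset_sub. Qed.

Lemma Xs_sub m : Y m `<=` X.
Proof.
by elim: m => [|m IH] /=; [exact: fsubset_refl|exact: fsubset_trans (Fset_sub _ _ _ _) IH].
Qed.

Lemma X_sub_gV_Hg m : X `<=` gV (H m).
Proof.
by elim: m => [|m IH] /=; [exact: fsubset_refl|exact: fsubset_trans IH (fsubsetUr _ _)].
Qed.

Lemma edge_le_Hg_succ m v p q : 0 <= v ->
  edge_le (H m.+1) v p q <->
  (exists2 C, C \in clusters m &
     mr_edge (Ball (Y m) (e m.+1) C) (Num.min (e m.+1) v) p q)
  \/ edge_le (H m) v p q.
Proof.
move=> v_ge0; have min_ge0 : 0 <= Num.min (e m.+1) v by rewrite le_min ltW ?e_succ_gt0.
rewrite edge_le_union (edge_le_bigunion (fun C => gtrunc (e m.+1)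
  (gcomplete (Ball (Y m) (e m.+1) C) (rho k (Ball (Y m) (e m.+1) C))))).
have rhoE C := @edge_le_rho R n k (Ball (Y m) (e m.+1) C) _ p q min_ge0.
split=> [[[C C_in /edge_le_trunc/rhoE pq]|]|[[C C_in /rhoE pq]|]]; auto.
  by left; exists C.
by left; exists C => //; apply/edge_le_trunc.
Qed.

Lemma edge_le_Fg i v p q : 0 <= v ->
  edge_le (Fg k X e i) v p q <-> mr_edge (Y i) v p q \/ edge_le (H i) v p q.
Proof. by move=> v_ge0; rewrite edge_le_union edge_le_rho. Qed.

Lemma edge_le_Hg_sym m v p q : edge_le (H m) v p q -> edge_le (H m) v q p.
Proof.
rewrite /edge_le; suff -> : gW (H m) p q = gW (H m) q p by [].
elim: m => [|m IH] //=; rewrite IH; congr omin.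
elim: (enum_fset _) => [|C s IHs] //=; rewrite IHs; congr omin.
by rewrite (eq_sym q p) rho_sym; case: (p \in _); case: (q \in _).
Qed.

Lemma conn_Hg_sym m v p q : conn (edge_le (H m) v) p q -> conn (edge_le (H m) v) q p.
Proof. by apply: clos_rt_sym => x y; exact: edge_le_Hg_sym. Qed.

Lemma edge_le_Hg_mono m m' v p q : (m <= m')%N -> edge_le (H m) v p q -> edge_le (H m') v p q.
Proof.
move=> /subnK <-; elim: (m' - m)%N => [|d IH] pq //.
by rewrite addSn; apply/edge_le_union; right; exact: IH.
Qed.

Lemma mr_edge_of_Hg m v p q : 0 <= v -> edge_le (H m) v p q -> mr_edge X v p q.
Proof.
move=> v_ge0; elim: m => [[]//|m IH] /(edge_le_Hg_succ _ _ _ v_ge0) [[C _ pq]|].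
  apply: mr_edge_mono pq; last by rewrite ge_min lexx orbT.
  exact: fsubset_trans (Ball_sub _ _ _) (Xs_sub m).
exact: IH.
Qed.

Lemma edge_le_Hg_of_component m C v x y : C \in clusters m ->
  x \in C -> y \in C -> v <= e m.+1 -> mr_edge (Y m) v x y -> edge_le (H m.+1) v x y.
Proof.
move=> C_in x_in y_in v_le xy.
have v_ge0 : 0 <= v by case: xy => _ [_ _ /(le_trans (dist_ge0 _ _))].
apply/edge_le_Hg_succ => //; left; exists C; rewrite // (min_idPr v_le).
exact: mr_edge_Ball (Dstar_sub C_in) v_le x_in y_in xy.
Qed.

Lemma conn_Hg_component m C v x y : e m.+1 <= v -> C \in clusters m ->
  x \in C -> y \in C -> conn (edge_le (H m.+1) v) x y.
Proof.
move=> e_le C_in; have e1_ge0 := ltW (e_succ_gt0 m).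
have step a b : a \in C -> b \in core m -> dist a b <= e m.+1 ->
    b \in C /\ conn (edge_le (H m.+1) v) a b.
  move=> a_in b_core ab; have b_in := Dstar_closed C_in a_in b_core ab.
  split => //; have [<-|a_b] := eqVneq a b; first exact: rt_refl.
  apply/rt_step/(edge_le_mono e_le)/(edge_le_Hg_of_component C_in a_in b_in) => //.
  have := Dstar_sub_coreset C_in => /fsubsetP C_core.
  move: (C_core a a_in) b_core; rewrite !in_coreset // => /andP[a_Y ca] /andP[b_Y cb].
  by split; split.
suff from_root : exists2 p, p \in C & forall z, z \in C -> conn (edge_le (H m.+1) v) p z.
  have [p _ pz] := from_root => x_in y_in.
  exact: rt_trans (conn_Hg_sym (pz x x_in)) (pz y y_in).
have /in_Dstar[p p_core C_p] := C_in; exists p; first by rewrite C_p; case: (compC_self p_core).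
move=> z; rewrite C_p => /in_compC[_ [s [s_path <-]]].
have : p \in C by rewrite C_p; case: (compC_self p_core).
elim: s p {p_core C_p} s_path => [|b s IH] a /=; first by move=> _ _; exact: rt_refl.
move=> /andP[/and3P[_ b_core ab] s_path] a_in; have [b_in ab_conn] := step a b a_in b_core ab.
exact: rt_trans ab_conn (IH b s_path b_in).
Qed.

Lemma noise_kept m x : x \in Y m -> x \notin core m -> x \in Y m.+1.
Proof. by move=> x_in x_noise; apply/in_Fset; split => //; right; rewrite inE x_noise. Qed.

Lemma almost_nearest_kept m C w z : C \in clusters m -> w \in Y m ->
  w \notin C -> z \in C -> (forall c, c \in C -> dist w z - e m.+1 <= dist w c) ->
  z \in Y m.+1.
Proof.
move=> C_in w_in w_notin z_in z_nearest; apply/in_Fset.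
split; first exact: fsubsetP (Dstar_sub C_in) _ z_in.
left; exists C; split => //; split => //.
apply: (almost_nearest_thicken n_gt0 (e_succ_gt0 m) _ w_notin z_in z_nearest).
exact: fsubsetP (Xs_sub m) _ w_in.
Qed.

Lemma near_nearest_kept m C w c z : C \in clusters m -> w \in Y m ->
  w \notin C -> c \in C -> (forall c', c' \in C -> dist w c <= dist w c') ->
  z \in Y m -> dist c z <= e m.+1 -> z \in Y m.+1.
Proof.
move=> C_in w_in w_notin c_in c_nearest z_in cz.
have [z_core|] := boolP (z \in core m); last exact: noise_kept.
apply: (almost_nearest_kept C_in w_in w_notin (Dstar_closed C_in c_in z_core cz)) => c' c'_in.
by have := dist_triangle w c z; have := c_nearest c' c'_in; lra.
Qed.

Lemma nearest_core_kept m v w x : e m.+1 <= v -> w \in Y m -> x \in core m ->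
  w \notin comp m x ->
  exists x', [/\ x' \in Y m.+1, dist w x' <= dist w x, (k <= nbr_count (Y m.+1) x' v)%N
               & conn (edge_le (H m.+1) v) x x'].
Proof.
move=> e_le w_in x_core w_notin; have [C_in x_in] := compC_self x_core.
have [c c_in c_nearest] := seq_argmin (dist w) x_in.
have e1_ge0 := ltW (e_succ_gt0 m).
have c_core := fsubsetP (Dstar_sub_coreset C_in) _ c_in.
have kept z := near_nearest_kept C_in w_in w_notin c_in c_nearest z.
exists c; split.
- by apply: kept; [exact: fsubsetP (coreset_sub _ _ _) _ c_core|rewrite distxx].
- exact: c_nearest x x_in.
- apply: leq_trans (nbr_count_mono _ (fsubset_refl _) e_le).
  move: c_core; rewrite in_coreset // => /andP[_ /leq_trans]; apply.
  by apply: nbr_count_le => z z_in _; exact: kept.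
- exact: conn_Hg_component e_le C_in x_in c_in.
Qed.

(* The neighbours within e_(m+1) of the point c of C nearest to x survive and lie within
   v of x; together with c they are at least k points. *)
Lemma nbr_count_kept_near_component m v x C c0 : x \in Y m -> x \notin core m ->
  C \in clusters m -> c0 \in C -> dist x c0 + e m.+1 <= v ->
  (k <= nbr_count (Y m.+1) x v)%N.
Proof.
move=> x_in x_noise C_in c0_in c0_near; have e1_ge0 := ltW (e_succ_gt0 m).
have x_notin := notin_Dstar C_in x_noise.
have [c c_in c_nearest] := seq_argmin (dist x) c0_in; have := c_nearest c0 c0_in => xc.
have kept z := near_nearest_kept C_in x_in x_notin c_in c_nearest z.
have c_core := fsubsetP (Dstar_sub_coreset C_in) _ c_in.
move: (c_core); rewrite in_coreset // => /andP[c_Y /leq_trans]; apply.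
set A := [fset z in Y m | (z != c) && (dist c z <= e m.+1)].
have sub : (A `\ x) `|` [fset c] `<=` [fset z in Y m.+1 | (z != x) && (dist x z <= v)].
  apply/fsubsetP => z; rewrite in_fsetU in_fsetD1 in_fset1 !(in_fset_sep (Y m.+1)) in_fset_sep.
  move=> /orP[/andP[zx /and3P[z_in _ cz]]|/eqP ->].
    by rewrite kept // zx /=; have := dist_triangle x c z; lra.
  rewrite kept ?distxx //=; apply/andP; split; last by have := dist_ge0 x c; lra.
  by apply: contraNneq x_notin => <-.
apply: leq_trans (fsubset_leq_card sub); rewrite /nbr_count -/A.
rewrite fsetUC cardfsU1 (cardfsD1 x A) in_fsetD1 [c \in A]in_fset_sep eqxx /=.
by rewrite !andbF /= leq_add2r leq_b1.
Qed.

Lemma nbr_count_kept_far m v x : x \in Y m -> x \notin core m ->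
  (forall C c, C \in clusters m -> c \in C -> v < dist x c + e m.+1) ->
  (nbr_count (Y m) x v <= nbr_count (Y m.+1) x v)%N.
Proof.
move=> x_in x_noise far; apply: nbr_count_le => z z_in _ xz.
have [z_core|] := boolP (z \in core m); last exact: noise_kept.
have [C_in z_in_C] := compC_self z_core.
apply: (almost_nearest_kept C_in x_in (notin_Dstar C_in x_noise) z_in_C) => c c_in.
by have := far _ _ C_in c_in; lra.
Qed.

Lemma nbr_count_noise_kept m v x : x \in Y m -> x \notin core m ->
  (k <= nbr_count (Y m) x v)%N -> (k <= nbr_count (Y m.+1) x v)%N.
Proof.
move=> x_in x_noise k_le.
case: (pselect (exists C c, [/\ C \in clusters m, c \in C
                                 & dist x c + e m.+1 <= v])) => [[C [c [C_in c_in xc]]]|far].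
  exact: nbr_count_kept_near_component x_in x_noise C_in c_in xc.
apply: leq_trans k_le (nbr_count_kept_far x_in x_noise _) => C c C_in c_in.
by rewrite ltNge; apply: contra_notN far => xc; exists C, c.
Qed.

Lemma kept_representative m v w x : e m.+1 <= v -> w \in Y m -> x \in Y m ->
  (k <= nbr_count (Y m) x v)%N -> (x \in core m -> w \notin comp m x) ->
  exists x', [/\ x' \in Y m.+1, dist w x' <= dist w x, (k <= nbr_count (Y m.+1) x' v)%N
               & conn (edge_le (H m.+1) v) x x'].
Proof.
move=> e_le w_in x_in k_le; have [x_core /(_ isT)|x_noise _] := boolP (x \in core m).
  exact: nearest_core_kept.
exists x; split; rewrite ?noise_kept //; last exact: rt_refl.
exact: nbr_count_noise_kept.
Qed.

Local Notation HY m v := (fun x y => edge_le (H m) v x y \/ mr_edge (Y m) v x y).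

(* The edge p q is rerouted through representatives p', q' kept in the next level: each
   is joined to its endpoint inside its cluster by edges of H(m+1), and choosing them as
   nearest points keeps d(p', q') <= d(p, q). *)
Lemma mr_edge_step m v p q : e m.+1 <= v -> mr_edge (Y m) v p q -> conn (HY m.+1 v) p q.
Proof.
move=> e_le [[p_in q_in _] [cp cq pq_le]].
have lift x y : conn (edge_le (H m.+1) v) x y -> conn (HY m.+1 v) x y.
  by apply: clos_rt_sub => ? ? ?; apply: rt_step; left.
case: (pselect (q \in core m /\ p \in comp m q)) => [[q_core p_in_q]|p_notin_q].
  have [C_in q_in_q] := compC_self q_core.
  by apply: lift; exact: conn_Hg_component e_le C_in p_in_q q_in_q.
have p_notin_comp : q \in core m -> p \notin comp m q.
  by move=> q_core; apply/negP => p_in_q; apply: p_notin_q.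
have [q' [q'_in pq' cq' /conn_Hg_sym q'q]] := kept_representative e_le p_in q_in cq p_notin_comp.
case: (pselect (p \in core m /\ q' \in comp m p)) => [[p_core q'_in_p]|q'_notin_p].
  have [C_in p_in_p] := compC_self p_core.
  by apply: lift; apply: rt_trans (conn_Hg_component e_le C_in p_in_p q'_in_p) q'q.
have q'_notin_comp : p \in core m -> q' \notin comp m p.
  by move=> p_core; apply/negP => q'_in_p; apply: q'_notin_p.
have q'_in_Y := fsubsetP (Xs_succ_sub m) _ q'_in.
have [p' [p'_in q'p' cp' pp']] := kept_representative e_le q'_in_Y p_in cp q'_notin_comp.
apply: rt_trans (lift _ _ pp') (@rt_trans _ _ _ q' _ _ (lift _ _ q'q)).
have [<-|p'q'] := eqVneq p' q'; first exact: rt_refl.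
apply: rt_step; right; split; split => //.
by rewrite distC (le_trans q'p') // distC (le_trans pq').
Qed.

Lemma mr_edge_iter j v p q : e j <= v -> mr_edge X v p q -> conn (HY j v) p q.
Proof.
elim: j => [|j IH] e_le pq; first by apply: rt_step; right.
apply: clos_rt_sub (IH (le_trans (ltW (e_incr j)) e_le) pq) => x y [xy|xy].
  by apply/rt_step; left; exact: edge_le_Hg_mono (leqnSn j) xy.
exact: mr_edge_step e_le xy.
Qed.

Lemma edge_le_Hg_of_mr_edge m v x y : v <= e m.+1 -> mr_edge (Y m) v x y ->
  edge_le (H m.+1) v x y.
Proof.
move=> v_le xy; have [[x_in y_in _] [cx cy xy_le]] := xy.
have e1_ge0 := ltW (e_succ_gt0 m).
have core_of z : z \in Y m -> (k <= nbr_count (Y m) z v)%N -> z \in core m.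
  by move=> z_in cz; rewrite in_coreset // z_in (leq_trans cz) // nbr_count_mono.
have [C_in x_in_C] := compC_self (core_of x x_in cx).
have y_in_C := Dstar_closed C_in x_in_C (core_of y y_in cy) (le_trans xy_le v_le).
exact: edge_le_Hg_of_component C_in x_in_C y_in_C v_le xy.
Qed.

Lemma Hg_complete j v p q : (0 < j)%N -> e j.-1 < v -> v <= e j ->
  mr_edge X v p q -> conn (edge_le (H j) v) p q.
Proof.
case: j => // m _ /= e_lt v_le pq.
apply: clos_rt_sub (mr_edge_iter (ltW e_lt) pq) => x y [xy|xy]; apply: rt_step.
  exact: edge_le_Hg_mono (leqnSn m) xy.
exact: edge_le_Hg_of_mr_edge v_le xy.
Qed.

Lemma level_of i a : 0 < a -> a <= e i ->
  exists j, [/\ (0 < j)%N, (j <= i)%N, e j.-1 < a & a <= e j].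
Proof.
move=> a_gt0; elim: i => [|i IH] a_le; first by move: a_gt0; rewrite -e0; lra.
have [a_le'|a_gt] := lerP a (e i); last by exists i.+1.
by have [j [? ? ? ?]] := IH a_le'; exists j; split => //; exact: leqW.
Qed.

Lemma Fg_complete i a p q : 0 <= a -> mr_edge X a p q -> conn (edge_le (Fg k X e i) a) p q.
Proof.
move=> a_ge0 pq.
have [e_le|a_lt] := lerP (e i) a.
  apply: clos_rt_sub (mr_edge_iter e_le pq) => x y xy.
  by apply/rt_step/edge_le_Fg => //; case: xy; auto.
have [[_ _ p_q] [_ _ pq_le]] := pq.
have [j [j_gt0 j_le e_lt a_le]] := level_of (lt_le_trans (dist_gt0 p_q) pq_le) (ltW a_lt).
apply: clos_rt_sub (Hg_complete j_gt0 e_lt a_le pq) => x y xy.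
by apply/rt_step/edge_le_Fg => //; right; exact: edge_le_Hg_mono j_le xy.
Qed.

Lemma gconn_Hg_rho i nu p q : p \in X -> q \in X ->
  (0 < i)%N -> e i.-1 < nu -> nu <= e i ->
  gconn (gtrunc nu (H i)) p q <-> gconn (gtrunc nu (gcomplete X (rho k X))) p q.
Proof.
move=> p_in q_in i_gt0 e_lt nu_le; have nu_ge0 := le_trans (e_ge0 _) (ltW e_lt).
have rhoE x y := edge_le_rho k X x y nu_ge0.
rewrite !gconn_truncE; split=> -[_ _ pq]; split; rewrite ?(fsubsetP (X_sub_gV_Hg i)) //.
  by apply: clos_rt_sub pq => x y /(mr_edge_of_Hg nu_ge0)/rhoE; exact: rt_step.
by apply: clos_rt_sub pq => x y /rhoE; exact: Hg_complete.
Qed.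

Lemma gconn_Fg_rho i a p q : p \in X -> q \in X -> 0 <= a ->
  gconn (gtrunc a (Fg k X e i)) p q <-> gconn (gtrunc a (gcomplete X (rho k X))) p q.
Proof.
move=> p_in q_in a_ge0; have rhoE x y := edge_le_rho k X x y a_ge0.
have in_gV x : x \in X -> x \in gV (Fg k X e i).
  by move=> x_in; rewrite in_fsetU (fsubsetP (X_sub_gV_Hg i)) ?orbT.
rewrite !gconn_truncE; split=> -[_ _ pq]; split; rewrite ?in_gV //.
  apply: clos_rt_sub pq => x y /(edge_le_Fg _ _ _ a_ge0) xy; apply/rt_step/rhoE.
  by case: xy => [/(mr_edge_mono (Xs_sub i) (lexx _))|/(mr_edge_of_Hg a_ge0)].
by apply: clos_rt_sub pq => x y /rhoE; exact: Fg_complete.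
Qed.

End Construction.

Theorem theorem5p10 (R : realType) (n : nat) (X : {fset pt R n}) (k : nat)
    (e : nat -> R) :
  (2 <= n)%N ->
  e 0%N = 0 ->
  (forall m : nat, e m < e m.+1) ->
  forall (i : nat) (nu alpha : R) (p q : pt R n),
    p \in X -> q \in X -> p != q ->
    ((0 < i)%N -> e i.-1 < nu -> nu <= e i ->
       (gconn (gtrunc nu (Hg k X e i)) p q <->
        gconn (gtrunc nu (gcomplete X (rho k X))) p q)) /\
    (0 <= alpha ->
       (gconn (gtrunc alpha (Fg k X e i)) p q <->
        gconn (gtrunc alpha (gcomplete X (rho k X))) p q)).
Proof.
move=> n_ge2 e0 e_incr i nu alpha p q p_in q_in _.
have n_gt0 : (0 < n)%N := ltnW n_ge2.
split; [exact: gconn_Hg_rho | exact: gconn_Fg_rho].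
Qed.
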